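(* Let $D$ be a finite set and $P:D^2\to\{0,1\}$ a binary predicate. Assume there exist two-element subsets $B,C\subseteq D$ such that $P|_{B\times C}$ is a singleton. Then for every positive integer $n$ there is an instance $I$ of $\mathrm{CSP}(P)$ with $2n$ variables and $n^2$ constraints such that for every $0<\varepsilon<1$, every $\varepsilon$-sparsifier of $I$ has $n^2$ constraints.
   Context: A binary CSP instance is $I=(V,D,\Pi,w)$ where $V$ is a finite set of variables, $D$ a finite domain, $\Pi$ a set of constraints, each a pair $\langle (u,v),P\rangle$ with $u,v\in V$ distinct and $P:D^2\to\{0,1\}$, and $w:\Pi\to\mathbb{R}_{>0}$ positive weights. $\mathrm{CSP}(P)$ is the class of instances in which every constraint uses the predicate $P$. For an assignment $A:V\to D$, $\mathrm{Val}_I(A)=\sum_{\pi=\langle(u,v),P\rangle\in\Pi} w(\pi)P(A(u),A(v))$. For $0<\varepsilon<1$, an $\varepsilon$-sparsifier of $I$ is an instance $I_\varepsilon=(V,D,\Pi_\varepsilon,w_\varepsilon)$ with $\Pi_\varepsilon\subseteq\Pi$ and $w_\varepsilon:\Pi_\varepsilon\to\mathbb{R}_{>0}$ such that for every $A:V\to D$, $(1-\varepsilon)\mathrm{Val}_I(A)\le \mathrm{Val}_{I_\varepsilon}(A)\le(1+\varepsilon)\mathrm{Val}_I(A)$; its number of constraints is $|\Pi_\varepsilon|$. A predicate is a singleton if exactly one tuple is mapped to $1$. $P|_{B\times C}$ denotes the restriction of $P$ to $B\times C$. *)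

From mathcomp Require Import all_boot all_order all_algebra.
From mathcomp Require Import reals.
Set Implicit Arguments. Unset Strict Implicit. Unset Printing Implicit Defensive.
Import Order.TTheory GRing.Theory Num.Theory.
Local Open Scope ring_scope.

(* A binary CSP(P) instance on variable set V with real weights:
   since every constraint uses the fixed predicate P, a constraint
   <(u,v),P> is identified with the ordered pair (u,v).
   Pi is a *set* of such pairs; w gives the weight of each constraint
   (only its values on Pi matter). *)
Record instance (V : finType) (R : realType) := Instance {
  cons : {set V * V};
  wt : V * V -> R }.

Definition wf_instance (V : finType) (R : realType) (I : instance V R) : Prop :=
  forall c, c \in cons I -> c.1 != c.2 /\ 0 < wt I c.

Definition Val (V D : finType) (R : realType) (P : D -> D -> bool)
  (I : instance V R) (A : V -> D) : R :=
  \sum_(c in cons I) wt I c * (P (A c.1) (A c.2))%:R.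

Definition sparsifier (V D : finType) (R : realType) (P : D -> D -> bool)
  (eps : R) (I J : instance V R) : Prop :=
  cons J \subset cons I /\
  (forall c, c \in cons J -> 0 < wt J c) /\
  (forall A : V -> D,
     (1 - eps) * Val P I A <= Val P J A /\ Val P J A <= (1 + eps) * Val P I A).

(* Take the complete bipartite instance with unit weights between the first n and
   the last n variables.  If P restricted to {b, b'} x {c, c'} holds only at (b, c),
   then for each constraint (u, v) the assignment sending u to b, v to c, the other
   left variables to b' and the other right variables to c' satisfies (u, v) and no
   other constraint.  A sparsifier must give this assignment a value at least
   (1 - eps) > 0 times its value in the instance, so it must keep (u, v). *)

From mathcomp Require Import all_boot all_order all_algebra.
From mathcomp Require Import reals lra.
Set Implicit Arguments. Unset Strict Implicit. Unset Printing Implicit Defensive.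
Import Order.TTheory GRing.Theory Num.Theory.
Local Open Scope ring_scope.

Lemma singleton_restriction_witness (D : finType) (P : D -> D -> bool)
    (B C : {set D}) :
  #|B| = 2%N -> #|C| = 2%N -> #|[set x in setX B C | P x.1 x.2]| = 1%N ->
  exists b b' c c' : D, [/\ P b c, ~~ P b c', ~~ P b' c & ~~ P b' c'].
Proof.
move=> cardB cardC /eqP /cards1P [[b c] Pbc].
have : (b, c) \in [set x in setX B C | P x.1 x.2] by rewrite Pbc set11.
rewrite !inE /= => /andP [/andP [bB cC] Pb_c].
have only_bc x y : x \in B -> y \in C -> P x y -> x = b /\ y = c.
  move=> xB yC Pxy.
  have : (x, y) \in [set x in setX B C | P x.1 x.2] by rewrite !inE /= xB yC.
  by rewrite Pbc inE => /eqP [-> ->].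
have /cards1P [b' Bb'] : #|B :\ b| == 1%N.
  by have := cardsD1 b B; rewrite bB cardB => -[->].
have /cards1P [c' Cc'] : #|C :\ c| == 1%N.
  by have := cardsD1 c C; rewrite cC cardC => -[->].
have : b' \in B :\ b by rewrite Bb' set11.
rewrite !inE => /andP [b'_neq b'B].
have : c' \in C :\ c by rewrite Cc' set11.
rewrite !inE => /andP [c'_neq c'C].
exists b, b', c, c'; split=> //; apply/negP.
- by move=> /(only_bc _ _ bB c'C) [_ /eqP]; rewrite (negbTE c'_neq).
- by move=> /(only_bc _ _ b'B cC) [/eqP]; rewrite (negbTE b'_neq).
- by move=> /(only_bc _ _ b'B c'C) [/eqP]; rewrite (negbTE b'_neq).
Qed.

Section Sparsifiers.
Variables (V D : finType) (R : realType) (P : D -> D -> bool).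
Implicit Types (I J : instance V R) (A : V -> D) (eps : R).

Lemma Val_gt0 I A c :
  wf_instance I -> c \in cons I -> P (A c.1) (A c.2) -> 0 < Val P I A.
Proof.
move=> wfI cI Pc; rewrite /Val (bigD1 c) //= Pc mulr1.
have wt_gt0 : 0 < wt I c by have [] := wfI c cI.
have rest_ge0 : 0 <= \sum_(d in cons I | d != c) wt I d * (P (A d.1) (A d.2))%:R.
  apply: sumr_ge0 => d /andP [dI _]; have [_ /ltW wt_ge0] := wfI d dI.
  exact: mulr_ge0.
lra.
Qed.

Lemma Val_eq0 I A :
  (forall d, d \in cons I -> ~~ P (A d.1) (A d.2)) -> Val P I A = 0.
Proof. by move=> unsat; rewrite /Val big1 // => d /unsat /negbTE ->; rewrite mulr0. Qed.

Lemma sparsifier_Val_gt0 eps I J A :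
  eps < 1 -> sparsifier P eps I J -> 0 < Val P I A -> 0 < Val P J A.
Proof.
move=> eps_lt1 [_ [_ bounds]] VI_gt0; have [lower _] := bounds A.
by apply: lt_le_trans lower; rewrite mulr_gt0 // subr_gt0.
Qed.

Definition isolates I A c :=
  forall d, d \in cons I -> P (A d.1) (A d.2) = (d == c).

Lemma sparsifier_mem_isolated eps I J A c :
  wf_instance I -> eps < 1 -> sparsifier P eps I J ->
  c \in cons I -> isolates I A c -> c \in cons J.
Proof.
move=> wfI eps_lt1 sparse cI isoA; apply/negPn/negP => cNJ.
have VI_gt0 : 0 < Val P I A by apply: (Val_gt0 wfI cI); rewrite isoA // eqxx.
have := sparsifier_Val_gt0 eps_lt1 sparse VI_gt0.
have [JsubI _] := sparse.
rewrite Val_eq0 ?ltxx // => d dJ; rewrite isoA ?(subsetP JsubI) //.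
by apply: contraNneq cNJ => <-.
Qed.

Lemma sparsifier_cons_eq eps I J :
  wf_instance I -> eps < 1 ->
  (forall c, c \in cons I -> exists A, isolates I A c) ->
  sparsifier P eps I J -> cons J = cons I.
Proof.
move=> wfI eps_lt1 isolated sparse; apply/eqP; rewrite eqEsubset sparse.1 /=.
apply/subsetP => c cI; have [A isoA] := isolated c cI.
exact: sparsifier_mem_isolated sparse cI isoA.
Qed.

End Sparsifiers.

Section CompleteBipartite.
Variables (V D : finType) (R : realType) (P : D -> D -> bool) (L : {set V}).

Definition complete_bipartite : instance V R := Instance (setX L (~: L)) (fun=> 1).

Lemma complete_bipartite_wf : wf_instance complete_bipartite.
Proof.
move=> [u v]; rewrite !inE /= => /andP [uL vNL]; split; last exact: ltr01.
by apply: contraNneq vNL => <-.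
Qed.

Lemma card_complete_bipartite : #|cons complete_bipartite| = (#|L| * #|~: L|)%N.
Proof. exact: cardsX. Qed.

Variables (b b' c c' : D).
Hypotheses (Pbc : P b c) (NPbc' : ~~ P b c') (NPb'c : ~~ P b' c)
  (NPb'c' : ~~ P b' c').

Definition isolating_assignment (u v : V) (x : V) : D :=
  if x \in L then (if x == u then b else b') else (if x == v then c else c').

Lemma complete_bipartite_isolated u v :
  isolates P complete_bipartite (isolating_assignment u v) (u, v).
Proof.
move=> [x y]; rewrite !inE /= => /andP [xL yNL].
rewrite /isolating_assignment xL (negbTE yNL) xpair_eqE.
by case: (x == u); case: (y == v) => //=; exact: negbTE.
Qed.

End CompleteBipartite.

Lemma card_ord_lt m n : (n <= m)%N -> #|[set i : 'I_m | (i < n)%N]| = n.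
Proof.
move=> le_nm; have -> : [set i : 'I_m | (i < n)%N] = widen_ord le_nm @: setT.
  apply/setP => i; rewrite inE; apply/idP/imsetP => [lt_in | [j _ ->]].
  - by exists (Ordinal lt_in); last exact: val_inj.
  - exact: ltn_ord j.
rewrite card_imset ?cardsT ?card_ord //.
by move=> j k /(congr1 val) eq_jk; apply: val_inj.
Qed.

Theorem theorem3 (R : realType) (D : finType) (P : D -> D -> bool) :
  (exists B C : {set D},
     #|B| = 2%N /\ #|C| = 2%N /\
     #|[set x in setX B C | P x.1 x.2]| = 1%N) ->
  forall n : nat, (0 < n)%N ->
  exists I : instance 'I_(2 * n) R,
    wf_instance I /\ #|cons I| = (n ^ 2)%N /\
    forall eps : R, 0 < eps < 1 ->
      forall J : instance 'I_(2 * n) R,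
        sparsifier P eps I J -> #|cons J| = (n ^ 2)%N.
Proof.
move=> [B [C [cardB [cardC singleton]]]] n _.
have [b [b' [c [c' [Pbc NPbc' NPb'c NPb'c']]]]] :=
  singleton_restriction_witness cardB cardC singleton.
pose L := [set i : 'I_(2 * n) | (i < n)%N].
have cardL : #|L| = n by apply: card_ord_lt; rewrite leq_pmull.
have cardNL : #|~: L| = n.
  by apply/eqP; rewrite cardsCs setCK card_ord cardL mulSn mul1n addnK.
have card_cons : #|cons (complete_bipartite R L)| = (n ^ 2)%N.
  by rewrite card_complete_bipartite cardL cardNL mulnn.
exists (complete_bipartite R L); split; [exact: complete_bipartite_wf | split=> //].
move=> eps /andP [_ eps_lt1] J sparse.
have cons_eq : cons J = cons (complete_bipartite R L).
  apply: (sparsifier_cons_eq (@complete_bipartite_wf _ R L) eps_lt1 _ sparse).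
  move=> [u v] _; exists (isolating_assignment L b b' c c' u v).
  exact: complete_bipartite_isolated.
by rewrite cons_eq.
Qed.
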